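(* Let $k\ge1$ and let $f:\mathbb{N}^k\to\mathbb{N}$ be bad. Then $f\notin\mathscr{C}_{I_{\bar d=0}}$.
   Context: $\mathbb{N}=\{0,1,2,\dots\}$. For $A\subseteq\mathbb{N}$, $\bar d(A)=\limsup_{n\to\infty}\frac{|A\cap[0,n)|}{n}$. $\mathscr{C}_{I_{\bar d=0}}$ is the set of all finitary functions $f:\mathbb{N}^k\to\mathbb{N}$ ($k\ge1$) such that $\bar d(f[A^k])=0$ whenever $\bar d(A)=0$. A function $f:\mathbb{N}^k\to\mathbb{N}$ is called bad if there exists a rational $\varepsilon>0$ such that for every $i\in\mathbb{N}$ there are $n,t\ge i$ and $A\subseteq[i,n)$ with $|A\cap[0,r)|\le\frac{r}{2^i}$ for all $r\in\mathbb{N}$ and $|f[A^k]\cap[0,t)|\ge\varepsilon t$. *)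

From HB Require Import structures.
From mathcomp Require Import all_boot all_order all_algebra.
From mathcomp Require Import all_classical all_reals.
From mathcomp Require Import ereal topology sequences.
Set Implicit Arguments. Unset Strict Implicit. Unset Printing Implicit Defensive.
Import Order.TTheory GRing.Theory Num.Theory.
Local Open Scope classical_set_scope.
Local Open Scope ring_scope.

Definition cnt (A : set nat) (n : nat) : nat :=
  (\sum_(0 <= i < n) (if `[< A i >] then 1 else 0))%N.

Definition upper_density (R : realType) (A : set nat) : \bar R :=
  limn_esup (fun n : nat => ((cnt A n)%:R / n%:R : R)%:E).

(* f[A^k] for f : ℕ^k -> ℕ (ℕ^k represented as 'I_k -> nat) *)
Definition img (k : nat) (f : ('I_k -> nat) -> nat) (A : set nat) : set nat :=
  [set f x | x in [set x : 'I_k -> nat | forall i, A (x i)]].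

Definition in_C_dbar0 (R : realType) (k : nat) (f : ('I_k -> nat) -> nat) : Prop :=
  forall A : set nat, upper_density R A = 0%E ->
    upper_density R (img f A) = 0%E.

Definition bad (k : nat) (f : ('I_k -> nat) -> nat) : Prop :=
  exists eps : rat, 0 < eps /\
    forall i : nat, exists n t : nat, (i <= n)%N /\ (i <= t)%N /\
      exists A : set nat, A `<=` [set m | (i <= m < n)%N] /\
        (forall r : nat, ((cnt A r)%:R : rat) <= r%:R / (2 ^+ i)) /\
        eps * t%:R <= ((cnt (img f A) t)%:R : rat).

From mathcomp Require Import all_boot all_order all_algebra.
From mathcomp Require Import all_classical all_reals.
From mathcomp Require Import ereal topology sequences normedtype.
From mathcomp Require Import zify lra.
Set Implicit Arguments. Unset Strict Implicit. Unset Printing Implicit Defensive.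
Import Order.TTheory GRing.Theory Num.Theory numFieldNormedType.Exports.
Local Open Scope classical_set_scope.

(* Since f is bad, for every j there is a block B_j inside [j, N_j) whose
   counting function never exceeds r / 2^j, while f[B_j^k] has relative
   density at least eps at some scale t_j >= j.  The union A of all blocks has
   density zero: the first J blocks are finite, and the others together have
   relative density at most 2^(1-J).  But f[A^k] contains every f[B_j^k], so
   its counting function reaches eps t_j at arbitrarily large t_j. *)

Lemma le_cnt (A B : set nat) r : A `<=` B -> cnt A r <= cnt B r.
Proof.
move=> AB; rewrite /cnt; apply: leq_sum => i _.
by case: (asboolP (A i)) => // /AB Bi; rewrite (asboolT Bi).
Qed.

Lemma cntU (A B : set nat) r : cnt (A `|` B) r <= cnt A r + cnt B r.
Proof.
rewrite /cnt -big_split /=; apply: leq_sum => i _.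
case: (asboolP ((A `|` B) i)) => // -[] ABi; rewrite (asboolT ABi) //.
by rewrite addn1.
Qed.

Lemma cnt_le_bound (A : set nat) N r : A `<=` [set m | m < N] -> cnt A r <= N.
Proof.
move=> AN; suff : cnt A r <= minn r N by lia.
elim: r => [|r IH]; first by rewrite /cnt big_geq.
rewrite /cnt big_nat_recr //= -/(cnt A r).
case: (asboolP (A r)) => [/AN /= rN|_]; lia.
Qed.

Lemma cnt_eq0 (A : set nat) r : (forall m, A m -> r <= m) -> cnt A r = 0.
Proof.
move=> Age; rewrite /cnt big_nat_cond big1 // => i /andP[/andP[_ ir] _].
by case: (asboolP (A i)) => // /Age; lia.
Qed.

Section SparseBlocks.
Variables (B : nat -> set nat) (N : nat -> nat).
Hypothesis B_block : forall j, B j `<=` [set m | j <= m < N j].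
Hypothesis B_sparse : forall j r, cnt (B j) r * 2 ^ j <= r.

Definition tail_union J := [set m | exists2 j, J <= j & B j m].

Lemma cnt_tail_unionS J r :
  cnt (tail_union J) r <= cnt (B J) r + cnt (tail_union J.+1) r.
Proof.
apply: leq_trans (cntU _ _ _); apply: le_cnt => m [j Jj Bjm].
have [<-|neJ] := eqVneq j J; [by left | right; exists j => //; lia].
Qed.

(* The blocks from J on have densities 2^-J, 2^-(J+1), ..., summing to 2^(1-J). *)
Lemma cnt_tail_union J r : cnt (tail_union J) r * 2 ^ J <= r.*2.
Proof.
suff: forall d J, r <= J + d -> cnt (tail_union J) r * 2 ^ J <= r.*2.
  by apply; exact: leq_addl.
elim=> [|d IH] {}J rJ.
  by rewrite cnt_eq0 // => m [j Jj /B_block /andP[jm _]]; lia.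
have := leq_mul (cnt_tail_unionS J r) (leqnn (2 ^ J)).
have := IH J.+1 ltac:(lia); rewrite expnS.
have := B_sparse J r.
set a := cnt (B J) r; set b := cnt _ r; set c := cnt _ r; set P := 2 ^ J.
nia.
Qed.

Lemma cnt_head_union J r :
  cnt (tail_union 0) r <= \sum_(j < J) N j + cnt (tail_union J) r.
Proof.
elim: J => [|J IH]; first by rewrite big_ord0.
have BJ : cnt (B J) r <= N J by apply: cnt_le_bound => m /B_block /andP[].
rewrite big_ord_recr /= -addnA; apply: leq_trans IH _.
by have := cnt_tail_unionS J r; rewrite leq_add2l; lia.
Qed.

Lemma cnt_union_sparse_blocks J r :
  cnt (tail_union 0) r * 2 ^ J <= (\sum_(j < J) N j) * 2 ^ J + r.*2.
Proof.
have := leq_mul (cnt_head_union J r) (leqnn (2 ^ J)).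
have := cnt_tail_union J r; nia.
Qed.

End SparseBlocks.

Section Density.
Variable R : realType.
Local Open Scope ring_scope.

Definition density_ratio (A : set nat) (n : nat) : R := (cnt A n)%:R / n%:R.

Lemma density_ratio_ge0 A n : 0 <= density_ratio A n.
Proof. exact: divr_ge0. Qed.

Lemma upper_density_eq0P A :
  upper_density R A = 0%E <-> density_ratio A n @[n --> \oo] --> 0.
Proof.
split=> [dA0|cvgA].
  have : (density_ratio A n)%:E @[n --> \oo] --> 0%E.
    apply: limn_esup_le_cvg => [|n]; first by rewrite -dA0.
    by rewrite lee_fin density_ratio_ge0.
  by case/fine_cvgP.
by apply: (cvg_limn_einf_sup _).2; apply/fine_cvgP; split; first exact: nearW.
Qed.

Lemma density_ratio_cvg0 A :
  (forall e : R, 0 < e -> exists C : nat, forall r, (cnt A r)%:R <= C%:R + e * r%:R) ->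
  density_ratio A n @[n --> \oo] --> 0.
Proof.
move=> cntA; apply/cvgrPdist_le => e e0.
have [C hC] := cntA (e / 2) ltac:(by rewrite divr_gt0).
have [M hM] : exists M : nat, 2 * C%:R / e < M%:R.
  by exists (Num.bound (2 * C%:R / e)); apply: archi_boundP; rewrite divr_ge0 // ltW.
exists (maxn M 1) => // r /= rM.
have r0 : (0 < r)%N by lia.
rewrite sub0r normrN ger0_norm ?density_ratio_ge0 // ler_pdivrMr ?ltr0n //.
have Mr : (M%:R <= r%:R :> R) by rewrite ler_nat; lia.
have := hC r; move: hM; rewrite ltr_pdivrMr // => hM.
nra.
Qed.

Lemma density_ratio_small A (e : R) :
  density_ratio A n @[n --> \oo] --> 0 -> 0 < e ->
  exists M, forall n, (M <= n)%N -> (0 < n)%N -> (cnt A n)%:R < e * n%:R.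
Proof.
move=> /cvgrPdist_lt/(_ e) small e0; have [M _ hM] := small e0.
exists M => n Mn n0.
have := hM n Mn; rewrite /= sub0r normrN ger0_norm ?density_ratio_ge0 //.
by rewrite ltr_pdivrMr ?ltr0n.
Qed.

Lemma upper_density_sparse_blocks (B : nat -> set nat) (N : nat -> nat) :
  (forall j, B j `<=` [set m | (j <= m < N j)%N]) ->
  (forall j r, cnt (B j) r * 2 ^ j <= r)%N ->
  upper_density R (tail_union B 0) = 0%E.
Proof.
move=> B_block B_sparse; apply/upper_density_eq0P/density_ratio_cvg0 => e e0.
have [J hJ] : exists J : nat, 2 / e < (2 ^ J)%:R.
  exists (Num.bound (2 / e)); apply: lt_le_trans (archi_boundP _) _.
    by rewrite divr_ge0 // ltW.
  by rewrite ler_nat; exact/ltnW/ltn_expl.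
exists (\sum_(j < J) N j) => r.
have := cnt_union_sparse_blocks B_block B_sparse J r.
rewrite -(ler_nat R) natrD !natrM -muln2 natrM.
have PJ : (0 < (2 ^ J)%:R :> R) by rewrite ltr0n expn_gt0.
move: hJ; rewrite ltr_pdivrMr // => hJ.
have r0 : (0 <= r%:R :> R) by [].
nra.
Qed.

End Density.

Local Open Scope ring_scope.

Lemma bad_blocks k (f : ('I_k -> nat) -> nat) : bad f ->
  exists2 eps : rat, 0 < eps & exists (B : nat -> set nat) (N T : nat -> nat),
    forall j, [/\ (j <= T j)%N, B j `<=` [set m | (j <= m < N j)%N],
      forall r, (cnt (B j) r * 2 ^ j <= r)%N
      & eps * (T j)%:R <= (cnt (img f (B j)) (T j))%:R].
Proof.
move=> [eps [eps0 fbad]]; exists eps => //.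
have /choice [g hg] : forall j, exists p : nat * nat * set nat,
    [/\ (j <= p.1.2)%N, p.2 `<=` [set m | (j <= m < p.1.1)%N],
      forall r, (cnt p.2 r)%:R <= r%:R / 2 ^+ j :> rat
      & eps * (p.1.2)%:R <= (cnt (img f p.2) p.1.2)%:R].
  move=> j; have [n [t [_ [jt [A [Ablock [Asparse fA]]]]]]] := fbad j.
  by exists (n, t, A).
exists (fun j => (g j).2), (fun j => (g j).1.1), (fun j => (g j).1.2) => j.
have [jt Bblock Bsparse fB] := hg j; split=> // r.
by rewrite -(ler_nat rat) natrM natrX -ler_pdivlMr ?exprn_gt0.
Qed.

Lemma img_subset k (f : ('I_k -> nat) -> nat) (A B : set nat) :
  A `<=` B -> img f A `<=` img f B.
Proof. by move=> AB y [x Ax <-]; exists x => // i; apply: AB (Ax i). Qed.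

Theorem mainTheorem3 (R : realType) (k : nat) (f : ('I_k -> nat) -> nat) :
  (1 <= k)%N -> bad f -> ~ in_C_dbar0 R f.
Proof.
move=> _ /bad_blocks [eps eps0 [B [N [T hB]]]] fC.
pose A := tail_union B 0.
have A0 : upper_density R A = 0%E.
  by apply: (@upper_density_sparse_blocks R B N) => j; have [] := hB j.
have /upper_density_eq0P fA0 := fC A A0.
have epsR : 0 < ratr eps :> R by rewrite ltr0q.
have [M hM] := density_ratio_small fA0 epsR.
have [MT _ _ fBM] := hB M.+1.
have fBA : img f (B M.+1) `<=` img f A by apply: img_subset => m Bm; exists M.+1.
move: fBM; rewrite -(ler_rat R) rmorphM /= !ratr_nat => fBM.
have := hM (T M.+1) (ltnW MT) (leq_trans (ltn0Sn M) MT).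
apply/negP; rewrite -leNgt (le_trans fBM) // ler_nat.
exact: le_cnt.
Qed.
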